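(* Let $X=(V,E,T)$ be an $(s,k,K)$-two layer system, let $\lambda_{\operatorname{gr}}\ge0$ be such that the ground graph of $X$ is a $\lambda_{\operatorname{gr}}$-expander, and let $C\subseteq\mathbb{F}_p^V$ be a linear code modelled over $X$ ($p$ a prime power). Then for every $\underline{c}\in C\setminus\{\underline{0}\}$, $$\|\underline{c}\|\ge\frac{16}{s^4(s-1)^2k}\left(1-s(s-1)(k-1)\lambda_{\operatorname{gr}}\right).$$
   Context: An $(s,k,K)$-two layer system is a triple $X=(V,E,T)$ where: $V$ is a finite set; $E\subseteq 2^V$ with $|\tau|=k$ for all $\tau\in E$ and $\bigcup_{\tau\in E}\tau=V$; $T\subseteq 2^E$ with $|\sigma|=K$ for all $\sigma\in T$ and $\bigcup_{\sigma\in T}\sigma=E$. Write $v\in\sigma$ if $v\in\tau$ for some $\tau\in\sigma$; it is required that $2\le|\{\tau\in\sigma:v\in\tau\}|\le s$ for all $\sigma\in T$, $v\in\sigma$. A positive $w:T\to\mathbb{R}_{>0}$ is fixed and extended by $w(\tau)=\sum_{\sigma\ni\tau}w(\sigma)$ ($\tau\in E$), $w(v)=\sum_{\sigma\in T,v\in\sigma}w(\sigma)$, $w(B)=\sum_{\eta\in B}w(\eta)$. The ground graph has vertex set $V$, distinct $u,v$ adjacent iff some $\tau\in E$ contains both, with weight $\sum_{\tau\in E,u,v\in\tau}w(\tau)$. For a weighted graph $(V,E,m)$: $m(v)=\sum_{e\ni v}m(e)$, $m(U)=\sum_{v\in U}m(v)$, $m(U_1,U_2)=\sum_{(u_1,u_2)\in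 U_1\times U_2,\{u_1,u_2\}\in E}m(\{u_1,u_2\})$, $h_G=\min_{\emptyset\ne U\subsetneq V}\frac{m(U,V\setminus U)m(V)}{m(U)m(V\setminus U)}$; $G$ is a $\lambda$-expander if $1-h_G\le\lambda$. Codes: $\mathbb{F}_p$ is the field with $p$ elements; $\underline{e}\cdot\underline{c}=\sum_v\underline{e}(v)\underline{c}(v)$, $\operatorname{supp}(\underline{e})=\{v:\underline{e}(v)\neq0\}$. A linear code $C\subseteq\mathbb{F}_p^V$ is modelled over $X$ if there is $\mathcal{E}\subseteq\mathbb{F}_p^V$ with $C=\{\underline{c}:\underline{e}\cdot\underline{c}=0\ \forall\underline{e}\in\mathcal{E}\}$ such that $\underline{e}\mapsto\operatorname{supp}(\underline{e})$ is a bijection $\mathcal{E}\to E$, and a set $\mathcal{T}$ of linear dependencies (functions $\operatorname{ld}:\mathcal{E}\to\mathbb{F}_p$ with $\sum_{\underline{e}}\operatorname{ld}(\underline{e})(\underline{e}\cdot\underline{c})=0$ for all $\underline{c}$) with $T=\{\{\operatorname{supp}(\underline{e}):\operatorname{ld}(\underline{e})\ne0\}:\operatorname{ld}\in\mathcal{T}\}$. The norm is $\|\underline{c}\|=\frac1{w(V)}\sum_{v:\underline{c}(v)\neq0}w(v)$. *)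

From HB Require Import structures.
From mathcomp Require Import all_boot all_order all_algebra.
Set Implicit Arguments. Unset Strict Implicit. Unset Printing Implicit Defensive.
Import Order.TTheory GRing.Theory Num.Theory.
Local Open Scope ring_scope.

Section TwoLayer.
Variable V : finType.

Definition vin (sigma : {set {set V}}) (v : V) : bool :=
  [exists tau in sigma, v \in tau].

Definition two_layer_system (s k K : nat) (E : {set {set V}})
    (T : {set {set {set V}}}) : Prop :=
  [/\ (forall tau, tau \in E -> #|tau| = k),
      \bigcup_(tau in E) tau = [set: V],
      (forall sigma, sigma \in T -> sigma \subset E /\ #|sigma| = K),
      \bigcup_(sigma in T) sigma = E &
      (forall sigma v, sigma \in T -> vin sigma v ->
         (2 <= #|[set tau in sigma | v \in tau]| <= s)%N)].

Variable R : realFieldType.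

Definition wE (T : {set {set {set V}}}) (w : {set {set V}} -> R) (tau : {set V}) : R :=
  \sum_(sigma in T | tau \in sigma) w sigma.
Definition wV (T : {set {set {set V}}}) (w : {set {set V}} -> R) (v : V) : R :=
  \sum_(sigma in T | vin sigma v) w sigma.

Definition wg_deg (adj : rel V) (m : V -> V -> R) (v : V) : R :=
  \sum_(u | adj v u) m v u.
Definition wg_mass (adj : rel V) (m : V -> V -> R) (U : {set V}) : R :=
  \sum_(v in U) wg_deg adj m v.
Definition wg_cut (adj : rel V) (m : V -> V -> R) (U1 U2 : {set V}) : R :=
  \sum_(u1 in U1) \sum_(u2 in U2 | adj u1 u2) m u1 u2.
(* G is a lambda-expander iff 1 - h_G <= lambda, where h_G is the minimum over
   nonempty proper U of the ratio; unfolded as a bound on every ratio. *)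
Definition wg_expander (adj : rel V) (m : V -> V -> R) (lam : R) : Prop :=
  forall U : {set V}, U != set0 -> U != [set: V] ->
    1 - wg_cut adj m U (~: U) * wg_mass adj m [set: V]
          / (wg_mass adj m U * wg_mass adj m (~: U)) <= lam.

Definition ground_adj (E : {set {set V}}) : rel V :=
  fun u v => (u != v) && [exists tau in E, (u \in tau) && (v \in tau)].
Definition ground_w (E : {set {set V}}) (T : {set {set {set V}}})
    (w : {set {set V}} -> R) (u v : V) : R :=
  \sum_(tau in E | (u \in tau) && (v \in tau)) wE T w tau.

Definition wnorm (F : finFieldType) (T : {set {set {set V}}}) (w : {set {set V}} -> R)
    (c : {ffun V -> F}) : R :=
  (\sum_(v | c v != 0) wV T w v) / (\sum_v wV T w v).

End TwoLayer.

Section Codes.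
Variables (V : finType) (F : finFieldType).

Definition dotv (e c : {ffun V -> F}) : F := \sum_v e v * c v.
Definition supp (e : {ffun V -> F}) : {set V} := [set v | e v != 0].

Definition modelled_over (E : {set {set V}}) (T : {set {set {set V}}})
    (C : {set {ffun V -> F}}) : Prop :=
  exists (Ecal : {set {ffun V -> F}}) (Tcal : {set {ffun {ffun V -> F} -> F}}),
    [/\ C = [set c | [forall e in Ecal, dotv e c == 0]],
        {in Ecal &, injective supp},
        [set supp e | e in Ecal] = E,
        (forall ld : {ffun {ffun V -> F} -> F}, ld \in Tcal -> forall c : {ffun V -> F},
            \sum_(e in Ecal) ld e * dotv e c = 0) &
        T = [set [set supp e | e in Ecal & (ld : {ffun {ffun V -> F} -> F}) e != 0] | ld in Tcal]].

End Codes.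

From HB Require Import structures.
From mathcomp Require Import all_boot all_order all_algebra.
From mathcomp Require Import ring lra.
Import Order.TTheory GRing.Theory Num.Theory.
Set Implicit Arguments. Unset Strict Implicit. Unset Printing Implicit Defensive.
Local Open Scope ring_scope.

(* Let S be the support of a nonzero codeword c. A parity check e with support
   tau is orthogonal to c, so if tau meets S it meets S in at least two vertices.
   Since the ground degree of u is (k - 1) times the weight of the edges through
   u, every vertex of S keeps a 1/(k - 1) fraction of its degree inside S, and
   expansion then forces S to carry at least a (1/(k - 1) - lam) share of the
   total degree.  The weight of the edges through v lies between 2 w(v) and
   s w(v), so ||c|| >= 2 (1/(k - 1) - lam) / s, which dominates the stated
   constant. *)

Section WeightedGraph.
Variables (R : realFieldType) (V : finType) (adj : rel V) (m : V -> V -> R).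
Hypothesis m_ge0 : forall u v, 0 <= m u v.

Definition wg_internal (U : {set V}) : R :=
  \sum_(u in U) \sum_(v | adj u v && (v \in U)) m u v.

Lemma wg_mass_ge0 (U : {set V}) : 0 <= wg_mass adj m U.
Proof. by apply: sumr_ge0 => u _; apply: sumr_ge0. Qed.

Lemma wg_massE (U : {set V}) :
  wg_mass adj m U = wg_internal U + wg_cut adj m U (~: U).
Proof.
rewrite /wg_mass /wg_internal /wg_cut -big_split; apply: eq_bigr => u _.
rewrite /wg_deg (bigID (mem U)) /=; congr (_ + _).
by apply: eq_bigl => v; rewrite in_setC andbC.
Qed.

Lemma wg_mass_setT (U : {set V}) :
  wg_mass adj m [set: V] = wg_mass adj m U + wg_mass adj m (~: U).
Proof.
rewrite /wg_mass (bigID (mem U)) /=; congr (_ + _); apply: eq_bigl => v.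
  by rewrite in_setT.
by rewrite in_setT in_setC.
Qed.

(* Expansion bounds the cut of U from below, a large internal part bounds it from above. *)
Lemma expander_mass_lb (lam delta : R) (U : {set V}) :
  0 <= lam -> delta <= 1 -> wg_expander adj m lam -> U != set0 ->
  delta * wg_mass adj m U <= wg_internal U ->
  (delta - lam) * wg_mass adj m [set: V] <= wg_mass adj m U.
Proof.
move=> lam0 delta1 expander U0 internal_ge.
have mU0 := wg_mass_ge0 U; have mC0 := wg_mass_ge0 (~: U).
have cut_le : wg_cut adj m U (~: U) <= (1 - delta) * wg_mass adj m U.
  by have := wg_massE U; lra.
have [->|UT] := eqVneq U [set: V].
  by have := wg_mass_ge0 [set: V]; nra.
have := expander U U0 UT; rewrite (wg_mass_setT U).
set cut := wg_cut _ _ _ _ in cut_le *; set mU := wg_mass _ _ U in cut_le mU0 *.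
set mC := wg_mass _ _ (~: U) in mC0 *.
(* If a side has zero mass, the ratio is 0 because x / 0 = 0, so lam >= 1. *)
have [prod0|prod_neq0] := eqVneq (mU * mC) 0.
  by rewrite prod0 invr0 mulr0 subr0 => lam1; nra.
have prod_gt0 : 0 < mU * mC by rewrite lt_def prod_neq0 mulr_ge0.
rewrite -(ler_pM2r prod_gt0) mulrBl mul1r -!mulrA mulVf // mulr1 => cut_ge.
have mU_gt0 : 0 < mU.
  by rewrite lt_def mU0 andbT; apply: contraNneq prod_neq0 => ->; rewrite mul0r.
have : (1 - lam) * mC <= (1 - delta) * (mU + mC).
  by rewrite -(ler_pM2l mU_gt0); nra.
nra.
Qed.

End WeightedGraph.

Section GroundGraph.
Variables (R : realFieldType) (V : finType) (E : {set {set V}})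
  (T : {set {set {set V}}}) (w : {set {set V}} -> R) (s : nat).
Hypothesis w_ge0 : forall sigma, sigma \in T -> 0 <= w sigma.
Hypothesis sub_E : forall sigma, sigma \in T -> sigma \subset E.
Hypothesis mult : forall (sigma : {set {set V}}) (v : V), sigma \in T -> vin sigma v ->
  (2 <= #|[set tau in sigma | v \in tau]| <= s)%N.

Definition star_weight (v : V) : R := \sum_(tau in E | v \in tau) wE T w tau.

Lemma wE_ge0 (tau : {set V}) : 0 <= wE T w tau.
Proof. by apply: sumr_ge0 => sigma /andP [/w_ge0]. Qed.

Lemma wV_ge0 (v : V) : 0 <= wV T w v.
Proof. by apply: sumr_ge0 => sigma /andP [/w_ge0]. Qed.

Lemma ground_w_ge0 (u v : V) : 0 <= ground_w E T w u v.
Proof. by apply: sumr_ge0 => tau _; apply: wE_ge0. Qed.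

Lemma ground_nbhd_sum (u : V) (P : pred V) :
  \sum_(v | ground_adj E u v && P v) ground_w E T w u v
  = \sum_(tau in E | u \in tau) wE T w tau *+ #|[set v in tau | (u != v) && P v]|.
Proof.
have -> : \sum_(v | ground_adj E u v && P v) ground_w E T w u v
          = \sum_(v | (u != v) && P v) ground_w E T w u v.
  rewrite [LHS]big_mkcond [RHS]big_mkcond; apply: eq_bigr => v _.
  rewrite /ground_adj; case: (u != v) (P v) => [] []; rewrite ?andbF //=.
  case: existsP => // no_tau; rewrite /ground_w big1 // => tau /andP [Etau uv].
  by case: no_tau; exists tau; rewrite Etau.
rewrite /ground_w (exchange_big_dep (fun tau => (tau \in E) && (u \in tau))) /=.
  apply: eq_bigr => tau /andP [Etau utau]; rewrite -sumr_const.
  by apply: eq_bigl => v; rewrite !inE Etau utau andbC.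
by move=> v tau _ /andP [-> /andP [-> _]].
Qed.

Lemma ground_deg (k : nat) (u : V) :
  (forall tau, tau \in E -> #|tau| = k) ->
  wg_deg (ground_adj E) (ground_w E T w) u = (k%:R - 1) * star_weight u.
Proof.
move=> card_E; rewrite /wg_deg (eq_bigl (fun v => ground_adj E u v && predT v)).
  rewrite ground_nbhd_sum mulr_sumr; apply: eq_bigr => tau /andP [Etau utau].
  have -> : [set v in tau | (u != v) && predT v] = tau :\ u.
    by apply/setP => v; rewrite !inE andbT eq_sym andbC.
  have card_tau : #|tau :\ u|.+1 = k by rewrite -(card_E _ Etau) (cardsD1 u tau) utau.
  by rewrite -card_tau -natr1 addrK mulr_natl.
by move=> v; rewrite andbT.
Qed.

Lemma ground_mass (k : nat) (U : {set V}) :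
  (forall tau, tau \in E -> #|tau| = k) ->
  wg_mass (ground_adj E) (ground_w E T w) U = (k%:R - 1) * \sum_(v in U) star_weight v.
Proof. by move=> card_E; rewrite mulr_sumr; apply: eq_bigr => v _; apply: ground_deg. Qed.

Lemma star_weight_le_nbhd (S : {set V}) (u : V) :
  (forall tau, tau \in E -> u \in tau -> exists2 v, v \in tau :\ u & v \in S) ->
  star_weight u <= \sum_(v | ground_adj E u v && (v \in S)) ground_w E T w u v.
Proof.
move=> partner; rewrite ground_nbhd_sum; apply: ler_sum => tau /andP [Etau utau].
rewrite -[X in X <= _]mulr1n ler_wpMn2l ?wE_ge0 // card_gt0.
have [v /setD1P [vu vtau] vS] := partner _ Etau utau.
by apply/set0Pn; exists v; rewrite !inE vtau eq_sym vu.
Qed.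

Lemma expander_star_share (k : nat) (lam : R) (S : {set V}) :
  (1 < k)%N -> (forall tau, tau \in E -> #|tau| = k) ->
  0 <= lam -> wg_expander (ground_adj E) (ground_w E T w) lam -> S != set0 ->
  (forall u tau, u \in S -> tau \in E -> u \in tau -> exists2 v, v \in tau :\ u & v \in S) ->
  ((k%:R - 1)^-1 - lam) * \sum_(v in [set: V]) star_weight v <= \sum_(v in S) star_weight v.
Proof.
move=> k_gt1 card_E lam0 expander S0 partner.
have K1_gt0 : 0 < (k%:R : R) - 1 by rewrite subr_gt0 ltr1n.
have internal_ge : (k%:R - 1)^-1 * wg_mass (ground_adj E) (ground_w E T w) S
                   <= wg_internal (ground_adj E) (ground_w E T w) S.
  rewrite (ground_mass _ card_E) mulrA mulVf ?mul1r ?lt0r_neq0 //.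
  by apply: ler_sum => u uS; apply: star_weight_le_nbhd => tau; apply: partner.
have := expander_mass_lb ground_w_ge0 lam0 _ expander S0 internal_ge.
rewrite !(ground_mass _ card_E) mulrCA ler_pM2l // invf_le1 //.
by apply; rewrite lerBrDr (ler_nat R 2 k).
Qed.

Lemma star_weightE (v : V) :
  star_weight v = \sum_(sigma in T) w sigma *+ #|[set tau in sigma | v \in tau]|.
Proof.
rewrite /star_weight /wE (exchange_big_dep (mem T)) /=; last first.
  by move=> tau sigma _ /andP [].
apply: eq_bigr => sigma Tsigma; rewrite -sumr_const; apply: eq_bigl => tau.
rewrite !inE Tsigma /= andbC; case: (boolP (tau \in sigma)) => //= tau_sigma.
by rewrite (subsetP (sub_E Tsigma)).
Qed.

Lemma star_weight_bounds (v : V) :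
  2 * wV T w v <= star_weight v <= s%:R * wV T w v.
Proof.
rewrite star_weightE (bigID (fun sigma => vin sigma v)) /=.
rewrite [X in _ + X]big1 ?addr0; last first.
  move=> sigma /andP [_ not_in]; rewrite (_ : [set _ in _ | _] = set0) ?cards0 //.
  apply/setP => tau; rewrite !inE; apply: contraNF not_in => /andP [tau_sigma vtau].
  by apply/exists_inP; exists tau.
rewrite /wV !mulr_sumr; apply/andP; split; apply: ler_sum => sigma /andP [Tsigma vsigma];
  have /andP [ge2 les] := mult Tsigma vsigma;
  by rewrite mulr_natl ler_wpMn2l ?w_ge0.
Qed.

Lemma wnorm_lb (F : finFieldType) (c : {ffun V -> F}) (rho : R) :
  0 < \sum_v wV T w v -> 0 <= rho ->
  rho * \sum_(v in [set: V]) star_weight v <= \sum_(v in supp c) star_weight v ->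
  2 * rho <= s%:R * wnorm T w c.
Proof.
move=> total_gt0 rho0 share.
have supp_le : \sum_(v in supp c) star_weight v <= s%:R * \sum_(v | c v != 0) wV T w v.
  rewrite mulr_sumr big_mkcond [leRHS]big_mkcond; apply: ler_sum => v _.
  by rewrite inE; case: (c v != 0); [case/andP: (star_weight_bounds v) |].
have total_ge : 2 * \sum_v wV T w v <= \sum_(v in [set: V]) star_weight v.
  rewrite mulr_sumr [leRHS]big_mkcond; apply: ler_sum => v _.
  by rewrite in_setT; case/andP: (star_weight_bounds v).
rewrite /wnorm mulrA ler_pdivlMr //.
nra.
Qed.

End GroundGraph.

Lemma supp_eq0 (V : finType) (F : finFieldType) (c : {ffun V -> F}) :
  (supp c == set0) = (c == 0).
Proof.
apply/eqP/eqP => [supp0 | ->]; last by apply/setP => v; rewrite !inE ffunE eqxx.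
apply/ffunP => v; rewrite ffunE; apply/eqP.
by move/setP/(_ v): supp0; rewrite !inE => /negbFE.
Qed.

Lemma dotv_supp_partner (V : finType) (F : finFieldType) (e c : {ffun V -> F}) (u : V) :
  dotv e c = 0 -> u \in supp e -> c u != 0 -> exists2 v, v \in supp e :\ u & c v != 0.
Proof.
move=> dot0 ue cu; apply/exists_inP; apply: contra_eqT dot0 => /exists_inPn others.
rewrite /dotv (bigD1 u) //= big1 ?addr0 ?mulf_neq0 //; first by rewrite inE in ue.
move=> v vu; have [-> | ev] := eqVneq (e v) 0; first by rewrite mul0r.
by have := others v; rewrite !inE vu ev negbK => /(_ isT) /eqP ->; rewrite mulr0.
Qed.

Section TwoLayerSystem.
Variables (V : finType) (s k K : nat) (E : {set {set V}}) (T : {set {set {set V}}}).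
Hypothesis X : two_layer_system s k K E T.

Lemma two_layer_system_vin (v : V) : exists2 sigma, sigma \in T & vin sigma v.
Proof.
have [_ cover_V _ cover_E _] := X.
have /bigcupP [tau Etau vtau] : v \in \bigcup_(tau in E) tau by rewrite cover_V inE.
have /bigcupP [sigma Tsigma tau_sigma] : tau \in \bigcup_(sigma in T) sigma by rewrite cover_E.
by exists sigma => //; apply/exists_inP; exists tau.
Qed.

Lemma two_layer_system_s_ge2 (v : V) : (2 <= s)%N.
Proof.
have [_ _ _ _ mult] := X; have [sigma Tsigma vsigma] := two_layer_system_vin v.
by have /andP [ge2 les] := mult sigma v Tsigma vsigma; apply: leq_trans les.
Qed.

Lemma two_layer_system_wV_gt0 (R : realFieldType) (w : {set {set V}} -> R) (v : V) :
  (forall sigma, sigma \in T -> 0 < w sigma) -> 0 < wV T w v.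
Proof.
move=> w_gt0; have [sigma Tsigma vsigma] := two_layer_system_vin v.
rewrite /wV (bigD1 sigma) ?Tsigma //= ltr_pwDl ?w_gt0 // sumr_ge0 //.
by move=> sigma' /andP [/andP [/w_gt0 /ltW]].
Qed.

End TwoLayerSystem.

Lemma thm8p1_constant_le (R : realFieldType) (Sr Kr : R) :
  2 <= Sr -> 2 <= Kr -> 16 / (Sr ^+ 4 * (Sr - 1) ^+ 2 * Kr) <= 2 / (Sr * (Kr - 1)).
Proof.
move=> Sr2 Kr2.
have sq_Sr : 4 <= Sr * Sr by nra.
have cube : 8 <= Sr ^+ 3.
  by rewrite (_ : 8 = 2 * 4); [rewrite exprS expr2 ler_pM // ; lra | ring].
have sq : 1 <= (Sr - 1) ^+ 2 by rewrite expr2; nra.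
have prod8 : 8 <= Sr ^+ 3 * (Sr - 1) ^+ 2 by nra.
rewrite ler_pdivrMr ?mulr_gt0 ?exprn_gt0 //; try lra.
rewrite mulrAC ler_pdivlMr ?mulr_gt0 //; try lra.
have -> : Sr ^+ 4 * (Sr - 1) ^+ 2 * Kr = Sr * Kr * (Sr ^+ 3 * (Sr - 1) ^+ 2).
  by rewrite exprS; ring.
have SrKr : 0 <= Sr * Kr by nra.
move: prod8; set Y := _ * _ ^+ 2 => prod8; nra.
Qed.

Lemma thm8p1_bound_le (R : realFieldType) (Sr Kr lam x : R) :
  2 <= Sr -> 2 <= Kr -> 0 <= lam -> 0 <= x ->
  (0 <= (Kr - 1)^-1 - lam -> 2 * ((Kr - 1)^-1 - lam) <= Sr * x) ->
  16 / (Sr ^+ 4 * (Sr - 1) ^+ 2 * Kr) * (1 - Sr * (Sr - 1) * (Kr - 1) * lam) <= x.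
Proof.
move=> Sr2 Kr2 lam0 x0 hx.
set t := 1 - _; have [t_le0|t_gt0] := lerP t 0.
  by apply: le_trans x0; rewrite mulr_ge0_le0 // divr_ge0 // !mulr_ge0 ?exprn_ge0; lra.
have t_le : t <= 1 - (Kr - 1) * lam.
  have : 0 <= (Sr * (Sr - 1) - 1) * ((Kr - 1) * lam) by rewrite mulr_ge0 //; nra.
  by rewrite /t; nra.
have rhoE : 2 / (Sr * (Kr - 1)) * (1 - (Kr - 1) * lam) = 2 * ((Kr - 1)^-1 - lam) / Sr.
  by field; lra.
have rho0 : 0 <= (Kr - 1)^-1 - lam.
  rewrite subr_ge0 -(ler_pM2l (_ : 0 < Kr - 1)) ?mulfV; lra.
apply: (@le_trans _ _ (2 / (Sr * (Kr - 1)) * t)).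
  by apply: ler_wpM2r; [apply: ltW | apply: thm8p1_constant_le].
apply: (@le_trans _ _ (2 / (Sr * (Kr - 1)) * (1 - (Kr - 1) * lam))).
  by apply: ler_wpM2l => //; rewrite divr_ge0 // mulr_ge0; lra.
rewrite rhoE ler_pdivrMr; last lra.
by rewrite [x * Sr]mulrC (hx rho0).
Qed.

Lemma modelled_over_partner (V : finType) (F : finFieldType) (E : {set {set V}})
  (T : {set {set {set V}}}) (C : {set {ffun V -> F}}) (c : {ffun V -> F}) :
  modelled_over E T C -> c \in C ->
  forall u tau, u \in supp c -> tau \in E -> u \in tau ->
  exists2 v, v \in tau :\ u & v \in supp c.
Proof.
move=> [Ecal [Tcal [CE _ EcalE _ _]]] Cc u tau cu; rewrite -EcalE => /imsetP [e Ee ->] ue.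
have dot0 : dotv e c = 0 by move: Cc; rewrite CE inE => /forall_inP /(_ e Ee) /eqP.
rewrite inE in cu; have [v ve cv] := dotv_supp_partner dot0 ue cu.
by exists v => //; rewrite inE.
Qed.

Theorem theorem8p1 (R : realFieldType) (V : finType) (s k K : nat)
  (E : {set {set V}}) (T : {set {set {set V}}}) (w : {set {set V}} -> R)
  (lam : R) (F : finFieldType) (C : {set {ffun V -> F}}) :
  two_layer_system s k K E T ->
  (forall sigma, sigma \in T -> 0 < w sigma) ->
  0 <= lam ->
  wg_expander (ground_adj E) (ground_w E T w) lam ->
  modelled_over E T C ->
  forall c, c \in C -> c != 0 ->
    16 / (s%:R ^+ 4 * (s%:R - 1) ^+ 2 * k%:R)
      * (1 - s%:R * (s%:R - 1) * (k%:R - 1) * lam) <= wnorm T w c.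
Proof.
move=> X w_gt0 lam0 expander modelled c Cc c_neq0.
have [card_E cover_V sub_T _ mult] := X.
have w_ge0 sigma (Tsigma : sigma \in T) : 0 <= w sigma := ltW (w_gt0 _ Tsigma).
have sub_E sigma (Tsigma : sigma \in T) : sigma \subset E := (sub_T _ Tsigma).1.
have partner := modelled_over_partner modelled Cc.
have supp_neq0 : supp c != set0 by rewrite supp_eq0.
have /set0Pn [u0 cu0] := supp_neq0.
have /bigcupP [tau0 Etau0 u0tau0] : u0 \in \bigcup_(tau in E) tau by rewrite cover_V inE.
have k_gt1 : (1 < k)%N.
  have [v0 v0tau0 _] := partner u0 tau0 cu0 Etau0 u0tau0.
  by rewrite -(card_E _ Etau0) (cardsD1 u0) u0tau0 ltnS card_gt0; apply/set0Pn; exists v0.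
apply: thm8p1_bound_le => //.
- by rewrite (ler_nat R 2 s) (two_layer_system_s_ge2 X u0).
- by rewrite (ler_nat R 2 k).
- by rewrite /wnorm divr_ge0 // sumr_ge0 // => v _; apply: wV_ge0.
move=> rho0; apply: (wnorm_lb w_ge0 sub_E mult) => //; last first.
  exact: (expander_star_share w_ge0 k_gt1 card_E lam0 expander supp_neq0 partner).
rewrite (bigD1 u0) //= ltr_pwDl ?(two_layer_system_wV_gt0 X) //.
by rewrite sumr_ge0 // => v _; apply: wV_ge0.
Qed.
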